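(* Consider the coding-DNA embedding setting described in the context. Suppose the host codon $\mathbf{X}$ is uniformly distributed on $\mathcal{X}^3$ and $X'=\alpha(\mathbf{X})$, i.e. $p(x')=|\mathcal{S}_{x'}|/64$ for all $x'\in\mathcal{X}'$. Then the achievable rate is $$R_\mathrm{c}^{\alpha(\mathrm{unif})}=\widetilde{C}_\mathrm{nc}-H(X')\ \text{bits/codon},$$ where $\widetilde{C}_\mathrm{nc}=\max_{p(\mathbf{u})} I(\mathbf{Z}_{(m)};\mathbf{U})$, the maximum being taken without constraint over all distributions of $\mathbf{U}$ on $\mathcal{X}^3$ (the capacity of the codon mutation channel $\Pi^m\otimes\Pi^m\otimes\Pi^m$).
   Context: Let $\mathcal{X}=\{\mathrm{A},\mathrm{C},\mathrm{T},\mathrm{G}\}$ (DNA bases); codons are elements of $\mathcal{X}^3$. Let $\mathcal{X}'=\{$Ala, Arg, Asn, Asp, Cys, Gln, Glu, Gly, His, Ile, Leu, Lys, Met, Phe, Pro, Ser, Thr, Trp, Tyr, Val, Stp$\}$. The genetic code is the map $\alpha:\mathcal{X}^3\to\mathcal{X}'$ whose fibres $\mathcal{S}_{x'}=\{\mathbf{x}\in\mathcal{X}^3:\alpha(\mathbf{x})=x'\}$ are: Ala: GCA, GCC, GCT, GCG; Arg: AGA, AGG, CGA, CGC, CGT, CGG; Asn: AAC, AAT; Asp: GAC, GAT; Cys: TGC, TGT; Gln: CAA, CAG; Glu: GAA, GAG; Gly: GGA, GGC, GGT, GGG; His: CAC, CAT; Ile: ATA, ATC, ATT; Leu: CTA,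 CTC, CTT, CTG, TTA, TTG; Lys: AAA, AAG; Met: ATG; Phe: TTC, TTT; Pro: CCA, CCC, CCT, CCG; Ser: AGC, AGT, TCA, TCC, TCT, TCG; Thr: ACA, ACC, ACT, ACG; Trp: TGG; Tyr: TAC, TAT; Val: GTA, GTC, GTT, GTG; Stp: TAA, TAG, TGA. These 21 sets partition $\mathcal{X}^3$. Mutation channel (Kimura model): for parameters $q\in[0,1]$ and $\gamma\in[0,3/2]$, the $4\times4$ base transition matrix $\Pi=[p(Z=z|Y=y)]$ (rows/columns ordered A, C, T, G) has diagonal entries $1-q$, entries $(1-2\gamma/3)q$ for the pairs $\{\mathrm{A},\mathrm{G}\}$ and $\{\mathrm{C},\mathrm{T}\}$, and entries $\gamma q/3$ for all other off-diagonal pairs. After $m\ge1$ cascaded independent mutation stages, a codon $\mathbf{u}$ is mapped to a random codon $\mathbf{Z}_{(m)}$ through the $64\times64$ transition matrix $\Pi^m\otimes\Pi^m\otimes\Pi^m$ (bases mutate independently). Achievable rate: given a distribution $p(x')$ of the host amino acid $X'$ on $\mathcal{X}'$, consider conditional distributions $p(\mathbf{u}|x')$ supported on $\mathcal{S}_{x'}$, and let $\mathbf{U}$ be the codon with $p(\mathbf{u})=p(x')p(\mathbf{u}|x')$ for $\mathbf{u}\in\mathcal{S}_{x'}$; $\mathbf{U}$ is the channel input and $\mathbf{Z}_{(m)}$ the output. The achievable rate is $R_\mathrm{c}^{X'}=\max_{p(\mathbf{u}|x')} I(\mathbf{Z}_{(m)};\mathbf{U})-H(X')$ bits/codon (logarithms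 base 2); $R_\mathrm{c}^{\alpha(\mathrm{unif})}$ denotes this rate when $X'=\alpha(\mathbf{X})$ with $\mathbf{X}$ uniform on $\mathcal{X}^3$. *)

From HB Require Import structures.
From mathcomp Require Import all_boot all_order all_algebra.
From mathcomp Require Import reals exp.
Set Implicit Arguments. Unset Strict Implicit. Unset Printing Implicit Defensive.
Import Order.TTheory GRing.Theory Num.Theory.
Local Open Scope ring_scope.

(* DNA bases: 'I_4 with A = 0, C = 1, T = 2, G = 3. *)
Definition base := 'I_4.
Definition codon := (base * base * base)%type.

(* Amino acids (and stop): 'I_21 in the order
   Ala=0 Arg=1 Asn=2 Asp=3 Cys=4 Gln=5 Glu=6 Gly=7 His=8 Ile=9 Leu=10
   Lys=11 Met=12 Phe=13 Pro=14 Ser=15 Thr=16 Trp=17 Tyr=18 Val=19 Stp=20. *)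
Definition aa := 'I_21.

(* Genetic code on numeric base codes (a b c = 1st 2nd 3rd base). *)
Definition aa_code (a b c : nat) : nat :=
  let pyr := (c == 1)%N || (c == 2)%N in   (* third base C or T *)
  match a, b with
  | 2, 2 => if pyr then 13 else 10          (* TTC TTT Phe; TTA TTG Leu *)
  | 2, 1 => 15                              (* TCx Ser *)
  | 2, 0 => if pyr then 18 else 20          (* TAC TAT Tyr; TAA TAG Stp *)
  | 2, 3 => if pyr then 4 else if (c == 0)%N then 20 else 17
                                            (* TGC TGT Cys; TGA Stp; TGG Trp *)
  | 1, 2 => 10                              (* CTx Leu *)
  | 1, 1 => 14                              (* CCx Pro *)
  | 1, 0 => if pyr then 8 else 5            (* CAC CAT His; CAA CAG Gln *)
  | 1, 3 => 1                               (* CGx Arg *)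
  | 0, 2 => if (c == 3)%N then 12 else 9    (* ATG Met; ATA ATC ATT Ile *)
  | 0, 1 => 16                              (* ACx Thr *)
  | 0, 0 => if pyr then 2 else 11           (* AAC AAT Asn; AAA AAG Lys *)
  | 0, 3 => if pyr then 15 else 1           (* AGC AGT Ser; AGA AGG Arg *)
  | 3, 2 => 19                              (* GTx Val *)
  | 3, 1 => 0                               (* GCx Ala *)
  | 3, 0 => if pyr then 3 else 6            (* GAC GAT Asp; GAA GAG Glu *)
  | 3, 3 => 7                               (* GGx Gly *)
  | _, _ => 0
  end.

Definition alpha (u : codon) : aa :=
  inord (aa_code u.1.1 u.1.2 u.2).

Section Channel.
Variable R : realType.

Definition log2 (x : R) : R := ln x / ln 2.

(* Kimura base transition matrix; transitions are {A,G} = {0,3} and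
   {C,T} = {1,2}, i.e. exactly the off-diagonal pairs with y + z = 3. *)
Definition Pi (q g : R) : 'M[R]_4 :=
  \matrix_(y < 4, z < 4)
    if y == z then 1 - q
    else if (y + z == 3)%N then (1 - 2 * g / 3) * q
    else g * q / 3.

Definition W (q g : R) (m : nat) (u z : codon) : R :=
  let P := Pi q g ^+ m in
  P u.1.1 z.1.1 * P u.1.2 z.1.2 * P u.2 z.2.

Definition is_dist (T : finType) (p : T -> R) : Prop :=
  (forall t, 0 <= p t) /\ \sum_t p t = 1.

Definition pZ q g m (p : codon -> R) (z : codon) : R :=
  \sum_u p u * W q g m u z.

Definition MI q g m (p : codon -> R) : R :=
  \sum_u \sum_z
    (let j := p u * W q g m u z in
     if j == 0 then 0 else j * log2 (W q g m u z / pZ q g m p z)).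

Definition entropy (T : finType) (p : T -> R) : R :=
  - \sum_t (if p t == 0 then 0 else p t * log2 (p t)).

Definition p_alpha (x' : aa) : R :=
  #|[set u : codon | alpha u == x']|%:R / 64.

Definition admissible_cond (c : aa -> codon -> R) : Prop :=
  forall x', is_dist (c x') /\ (forall u, alpha u != x' -> c x' u = 0).

Definition joint (px : aa -> R) (c : aa -> codon -> R) (u : codon) : R :=
  px (alpha u) * c (alpha u) u.

Definition is_max (P : R -> Prop) (v : R) : Prop :=
  P v /\ forall x, P x -> x <= v.

End Channel.

(* The Kimura matrix is invariant under translation of the base codes by the
   Klein four-group (bitwise xor), hence so are its powers and the codon
   channel: every row of the codon channel is a permutation of every other
   and every column sums to one.  For such a channel
   I(Z;U) <= sum_u p(u) (log 64 - H(W(u,.))) by ln x <= x - 1 applied to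
   1 / (64 p(z)), so the uniform input is capacity-achieving.  The uniform
   input is also admissible for X' = alpha(X), X uniform: take p(u|x')
   uniform on the fibre S_x'. Both maxima are therefore attained at the
   uniform codon distribution. *)
From HB Require Import structures.
From mathcomp Require Import all_boot all_order all_algebra.
From mathcomp Require Import reals exp.
From mathcomp Require Import ring lra.
Set Implicit Arguments. Unset Strict Implicit. Unset Printing Implicit Defensive.
Import Order.TTheory GRing.Theory Num.Theory.
Local Open Scope ring_scope.

Section MatrixPower.
Variables (R : pzSemiRingType) (n : nat) (A : 'M[R]_n).

Lemma mulmx_entry (B C : 'M[R]_n) i j : (B * C) i j = \sum_k B i k * C k j.
Proof. by rewrite -mulmxE mxE. Qed.

Lemma exp_mx_row_sum1 : (forall i, \sum_j A i j = 1) ->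
  forall k i, \sum_j (A ^+ k) i j = 1.
Proof.
move=> A_row; elim=> [|k IHk] i.
  rewrite expr0 (bigD1 i) //= mxE eqxx big1 ?addr0 // => j ji.
  by rewrite mxE eq_sym (negPf ji).
rewrite exprSr; under eq_bigr do rewrite mulmx_entry.
rewrite exchange_big /= -(IHk i); apply: eq_bigr => l _.
by rewrite -mulr_sumr A_row mulr1.
Qed.

Lemma exp_mx_col_sum1 : (forall j, \sum_i A i j = 1) ->
  forall k j, \sum_i (A ^+ k) i j = 1.
Proof.
move=> A_col; elim=> [|k IHk] j.
  rewrite expr0 (bigD1 j) //= mxE eqxx big1 ?addr0 // => i ij.
  by rewrite mxE (negPf ij).
rewrite exprSr; under eq_bigr do rewrite mulmx_entry.
rewrite exchange_big /= -(A_col j); apply: eq_bigr => l _.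
by rewrite -mulr_suml IHk mul1r.
Qed.

Lemma exp_mx_invariant (s : 'I_n -> 'I_n) : injective s ->
  (forall i j, A (s i) (s j) = A i j) ->
  forall k i j, (A ^+ k) (s i) (s j) = (A ^+ k) i j.
Proof.
move=> s_inj A_s; elim=> [|k IHk] i j; first by rewrite expr0 !mxE (inj_eq s_inj).
rewrite exprSr !mulmx_entry (reindex_inj s_inj) /=.
by apply: eq_bigr => l _; rewrite IHk A_s.
Qed.

End MatrixPower.

Lemma exp_mx_ge0 (R : numDomainType) n (A : 'M[R]_n) :
  (forall i j, 0 <= A i j) -> forall k i j, 0 <= (A ^+ k) i j.
Proof.
move=> A_ge0; elim=> [|k IHk] i j; first by rewrite expr0 mxE ler0n.
by rewrite exprSr mulmx_entry; apply: sumr_ge0 => l _; rewrite mulr_ge0.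
Qed.

Lemma log2_le_sub1 (R : realType) (x : R) : 0 < x -> log2 x <= (x - 1) / ln 2.
Proof.
move=> x_gt0; have ln2_gt0 : 0 < ln (2 : R) by apply: ln_gt0; lra.
rewrite /log2 ler_pM2r ?invr_gt0 //.
by have := @le_ln1Dx R (x - 1); rewrite [1 + _]addrC subrK; apply; lra.
Qed.

Lemma log2M (R : realType) (x y : R) : 0 < x -> 0 < y ->
  log2 (x * y) = log2 x + log2 y.
Proof. by move=> x_gt0 y_gt0; rewrite /log2 lnM ?posrE // mulrDl. Qed.

Section WeaklySymmetricChannel.
Variables (R : realType) (T : finType) (W : T -> T -> R).
Hypothesis W_ge0 : forall u z, 0 <= W u z.
Hypothesis W_row_sum : forall u, \sum_z W u z = 1.

Local Notation N := (#|T|%:R : R).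

Definition out_dist (p : T -> R) (z : T) : R := \sum_u p u * W u z.

Definition mutinfo (p : T -> R) : R :=
  \sum_u \sum_z
    (let j := p u * W u z in
     if j == 0 then 0 else j * log2 (W u z / out_dist p z)).

(* log |T| - H(W(u, .)) *)
Definition row_info (u : T) : R :=
  \sum_z (if W u z == 0 then 0 else W u z * log2 (N * W u z)).

Lemma eq_mutinfo p p' : p =1 p' -> mutinfo p = mutinfo p'.
Proof.
move=> pp'; have out_pp' z : out_dist p z = out_dist p' z.
  by apply: eq_bigr => u _; rewrite pp'.
by apply: eq_bigr => u _; apply: eq_bigr => z _; rewrite /= pp' out_pp'.
Qed.

Lemma uniform_is_dist : (0 < #|T|)%N -> is_dist (fun _ : T => N^-1).
Proof.
move=> T_gt0; split=> [_|]; first by rewrite invr_ge0 ler0n.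
by rewrite sumr_const -[_ *+ _]mulr_natl mulfV // pnatr_eq0 -lt0n.
Qed.

Lemma out_dist_sum1 p : is_dist p -> \sum_z out_dist p z = 1.
Proof.
case=> _ p_sum; rewrite /out_dist exchange_big /= -p_sum.
by apply: eq_bigr => u _; rewrite -mulr_sumr W_row_sum mulr1.
Qed.

(* Gibbs' inequality against the uniform distribution, linearized by
   ln x <= x - 1. *)
Lemma uniform_gibbs_sum_le0 (y : T -> R) : is_dist y ->
  \sum_z y z * ((N * y z)^-1 - 1) <= 0.
Proof.
case=> y_ge0 y_sum.
apply: (@le_trans _ _ (\sum_z (N^-1 - y z))).
  apply: ler_sum => z _; rewrite mulrBr mulr1 lerD2r.
  have [->|yz0] := eqVneq (y z) 0; first by rewrite mul0r invr_ge0 ler0n.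
  by rewrite invfM mulrCA mulfV // mulr1.
rewrite sumrB y_sum sumr_const -[_ *+ _]mulr_natr subr_le0.
rewrite -/N mulrC; have [->|N0] := eqVneq N 0; first by rewrite mul0r ler01.
by rewrite mulfV.
Qed.

Lemma mutinfo_le_row_info p : is_dist p -> mutinfo p <= \sum_u p u * row_info u.
Proof.
move=> p_dist; have [p_ge0 p_sum] := p_dist.
have ln2_gt0 : 0 < ln (2 : R) by apply: ln_gt0; lra.
pose y := out_dist p.
pose slack u z := p u * W u z * (((N * y z)^-1 - 1) / ln 2).
apply: (@le_trans _ _ (\sum_u \sum_z
    (p u * (if W u z == 0 then 0 else W u z * log2 (N * W u z)) + slack u z))).
  apply: ler_sum => u _; apply: ler_sum => z _; rewrite /slack /=.
  have [j0|j_neq0] := eqVneq (p u * W u z) 0.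
    rewrite j0 mul0r addr0; have [_|Wuz_neq0] := eqVneq (W u z) 0.
      by rewrite mulr0.
    by move/eqP: j0; rewrite mulf_eq0 (negPf Wuz_neq0) orbF => /eqP ->; rewrite mul0r.
  have pu_gt0 : 0 < p u.
    by rewrite lt_def p_ge0 andbT; apply: contraNneq j_neq0 => ->; rewrite mul0r.
  have W_gt0 : 0 < W u z.
    by rewrite lt_def W_ge0 andbT; apply: contraNneq j_neq0 => ->; rewrite mulr0.
  have j_le_y : p u * W u z <= y z.
    rewrite /y /out_dist (bigD1 u) //= lerDl.
    by apply: sumr_ge0 => v _; rewrite mulr_ge0.
  have y_gt0 : 0 < y z by apply: lt_le_trans j_le_y; rewrite mulr_gt0.
  have N_gt0 : 0 < N by rewrite ltr0n; apply/card_gt0P; exists u.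
  have -> : W u z / y z = (N * W u z) * (N * y z)^-1.
    by rewrite invfM mulrACA mulfV ?gt_eqF // mul1r.
  rewrite (gt_eqF W_gt0) log2M ?invr_gt0 ?mulr_gt0 // mulrDr mulrA lerD2l.
  by rewrite ler_pM2l ?mulr_gt0 // log2_le_sub1 ?invr_gt0 ?mulr_gt0.
under eq_bigr do rewrite big_split -mulr_sumr; rewrite big_split /= gerDl /slack.
rewrite exchange_big /=; under eq_bigr do rewrite -mulr_suml -/(out_dist p _).
rewrite -/y; under eq_bigr do rewrite mulrA; rewrite -mulr_suml.
rewrite pmulr_lle0 ?invr_gt0 //; apply: uniform_gibbs_sum_le0.
by split=> [z|]; [apply: sumr_ge0 => u _; rewrite mulr_ge0 | apply: out_dist_sum1].
Qed.

Hypothesis W_col_sum : forall z, \sum_u W u z = 1.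

Lemma mutinfo_uniform : (0 < #|T|)%N ->
  mutinfo (fun _ => N^-1) = \sum_u N^-1 * row_info u.
Proof.
move=> T_gt0; have N_neq0 : N != 0 by rewrite pnatr_eq0 -lt0n.
have out_unif z : out_dist (fun _ => N^-1) z = N^-1.
  by rewrite /out_dist -mulr_sumr W_col_sum mulr1.
apply: eq_bigr => u _; rewrite /row_info mulr_sumr; apply: eq_bigr => z _.
rewrite /= out_unif mulf_eq0 invr_eq0 (negPf N_neq0) /=.
by case: (_ == 0); rewrite ?mulr0 // invrK [W u z * _]mulrC -mulrA.
Qed.

Variable u0 : T.
Hypothesis W_row_perm :
  forall u, exists2 s : T -> T, injective s & forall z, W u z = W u0 (s z).

Lemma row_info_const u : row_info u = row_info u0.
Proof.
have [s s_inj W_s] := W_row_perm u.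
by rewrite /row_info [RHS](reindex_inj s_inj); apply: eq_bigr => z _; rewrite W_s.
Qed.

Lemma mutinfo_le_uniform p : is_dist p -> mutinfo p <= mutinfo (fun _ => N^-1).
Proof.
move=> p_dist; have T_gt0 : (0 < #|T|)%N by apply/card_gt0P; exists u0.
rewrite mutinfo_uniform //; apply: le_trans (mutinfo_le_row_info p_dist) _.
under eq_bigr do rewrite row_info_const.
under [X in _ <= X]eq_bigr do rewrite row_info_const.
rewrite -!mulr_suml (proj2 p_dist) sumr_const -[_ *+ _]mulr_natr.
by rewrite mulVf ?pnatr_eq0 -?lt0n.
Qed.

End WeaklySymmetricChannel.

Definition base_xor (a b : base) : base := inord (Nat.lxor a b).

Definition codon_xor (k u : codon) : codon :=
  (base_xor k.1.1 u.1.1, base_xor k.1.2 u.1.2, base_xor k.2 u.2).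

Ltac case_base a := case: a => [[|[|[|[|?]]]] ?] //.

Lemma base_xorE a b : nat_of_ord (base_xor a b) = Nat.lxor a b.
Proof. by rewrite /base_xor inordK //; case_base a; case_base b. Qed.

Lemma base_xorK a b : base_xor a (base_xor a b) = b.
Proof. by apply/val_inj; rewrite /= !base_xorE; case_base a; case_base b. Qed.

Lemma base_xorxx a : base_xor a a = ord0.
Proof. by apply/val_inj; rewrite /= base_xorE; case_base a. Qed.

Lemma base_xor_inj a : injective (base_xor a).
Proof. exact: can_inj (base_xorK a). Qed.

(* On 0..3, y + z = 3 iff y xor z = 3, and xor-ing both with k leaves
   y xor z unchanged. *)
Lemma base_xor_transition k y z :
  (base_xor k y + base_xor k z == 3)%N = (y + z == 3)%N.
Proof. by rewrite !base_xorE; case_base k; case_base y; case_base z. Qed.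

Lemma codon_xorK k u : codon_xor k (codon_xor k u) = u.
Proof. by case: u => [[a b] c]; rewrite /codon_xor /= !base_xorK. Qed.

Lemma codon_xor_inj k : injective (codon_xor k).
Proof. exact: can_inj (codon_xorK k). Qed.

Lemma card_codon : #|{: codon}| = 64%N.
Proof. by rewrite !card_prod !card_ord. Qed.

Lemma sum_codon_mul (R : pzSemiRingType) (a b c : base -> R) :
  \sum_(u : codon) a u.1.1 * b u.1.2 * c u.2 =
  (\sum_i a i) * (\sum_j b j) * (\sum_k c k).
Proof.
rewrite -(pair_bigA _ (fun (ij : base * base) k => a ij.1 * b ij.2 * c k)) /=.
rewrite -(pair_bigA _ (fun i j => \sum_k a i * b j * c k)) /=.
rewrite [X in X * _]mulr_suml mulr_suml; apply: eq_bigr => i _.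
rewrite [X in X * _]mulr_sumr mulr_suml; apply: eq_bigr => j _.
by rewrite mulr_sumr.
Qed.

Section KimuraChannel.
Variables (R : realType) (q g : R).

Lemma Pi_base_xor k y z : Pi q g (base_xor k y) (base_xor k z) = Pi q g y z.
Proof. by rewrite !mxE (inj_eq (@base_xor_inj k)) base_xor_transition. Qed.

Lemma Pi_row_sum y : \sum_z Pi q g y z = 1.
Proof. by rewrite !big_ord_recr big_ord0 /= !mxE; case_base y; rewrite /=; ring. Qed.

Lemma Pi_col_sum z : \sum_y Pi q g y z = 1.
Proof.
by rewrite -(Pi_row_sum z); apply: eq_bigr => y _; rewrite !mxE eq_sym addnC.
Qed.

Lemma Pi_ge0 : 0 <= q <= 1 -> 0 <= g <= 3 / 2 -> forall y z, 0 <= Pi q g y z.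
Proof.
move=> /andP[q_ge0 q_le1] /andP[g_ge0 g_le] y z.
by rewrite mxE; case: ifP => _; [lra | case: ifP => _; nra].
Qed.

Variable m : nat.
Local Notation P := (Pi q g ^+ m).

Lemma W_ge0 : 0 <= q <= 1 -> 0 <= g <= 3 / 2 -> forall u z, 0 <= W q g m u z.
Proof. by move=> hq hg u z; rewrite !mulr_ge0 // exp_mx_ge0 //; apply: Pi_ge0. Qed.

Lemma W_row_sum u : \sum_z W q g m u z = 1.
Proof.
rewrite (sum_codon_mul (P u.1.1) (P u.1.2) (P u.2)).
by rewrite !exp_mx_row_sum1 ?mul1r //; apply: Pi_row_sum.
Qed.

Lemma W_col_sum z : \sum_u W q g m u z = 1.
Proof.
rewrite (sum_codon_mul (P^~ z.1.1) (P^~ z.1.2) (P^~ z.2)).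
by rewrite !exp_mx_col_sum1 ?mul1r //; apply: Pi_col_sum.
Qed.

Lemma W_codon_xor k u z : W q g m (codon_xor k u) (codon_xor k z) = W q g m u z.
Proof.
have P_xor a := exp_mx_invariant (@base_xor_inj a) (Pi_base_xor a) m.
by rewrite /W /= !P_xor.
Qed.

Lemma W_row_perm u : exists2 s : codon -> codon, injective s &
  forall z, W q g m u z = W q g m (ord0, ord0, ord0) (s z).
Proof.
exists (codon_xor u) => [|z]; first exact: codon_xor_inj.
by rewrite -(W_codon_xor u u z) /codon_xor !base_xorxx.
Qed.

End KimuraChannel.

Lemma aa_code_surj :
  all (fun x => has (fun n => aa_code (n %/ 16) (n %/ 4 %% 4) (n %% 4) == x)
                    (iota 0 64))
      (iota 0 21).
Proof. by []. Qed.

Lemma alpha_surj (x : aa) : exists u, alpha u = x.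
Proof.
have /allP/(_ x) := aa_code_surj; rewrite mem_iota ltn_ord => /(_ isT).
case/hasP=> n; rewrite mem_iota add0n => n_lt64 /eqP code_n.
have a_lt : (n %/ 16 < 4)%N by rewrite ltn_divLR.
have b_lt : (n %/ 4 %% 4 < 4)%N by rewrite ltn_mod.
have c_lt : (n %% 4 < 4)%N by rewrite ltn_mod.
exists (Ordinal a_lt, Ordinal b_lt, Ordinal c_lt).
by apply/val_inj; rewrite /alpha /= inordK // code_n.
Qed.

Definition fibre (x : aa) : {set codon} := [set u | alpha u == x].

Lemma card_fibre_gt0 x : (0 < #|fibre x|)%N.
Proof.
by have [u ux] := alpha_surj x; apply/card_gt0P; exists u; rewrite inE ux.
Qed.

Section AminoAcidMarginal.
Variable R : realType.

Definition fibre_uniform (x : aa) (u : codon) : R :=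
  if alpha u == x then #|fibre x|%:R^-1 else 0.

Lemma p_alpha_is_dist : is_dist (@p_alpha R).
Proof.
split=> [x|]; first by rewrite divr_ge0 ?ler0n.
rewrite -mulr_suml -natr_sum.
have -> : (\sum_x #|fibre x|)%N = #|{: codon}|.
  rewrite -sum1_card (partition_big alpha predT) //=; apply: eq_bigr => x _.
  by rewrite -sum1_card; apply: eq_bigl => u; rewrite inE.
by rewrite card_codon divff ?pnatr_eq0.
Qed.

Lemma fibre_uniform_admissible : admissible_cond fibre_uniform.
Proof.
have fibre_neq0 x : (#|fibre x|%:R : R) != 0.
  by rewrite pnatr_eq0 -lt0n card_fibre_gt0.
move=> x; split; last by move=> u /negPf; rewrite /fibre_uniform => ->.
split=> [u|]; first by rewrite /fibre_uniform; case: ifP; rewrite ?invr_ge0 ?ler0n.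
transitivity (\sum_(u in fibre x) (#|fibre x|%:R : R)^-1).
  by rewrite [RHS]big_mkcond; apply: eq_bigr => u _; rewrite inE.
by rewrite sumr_const -[_ *+ _]mulr_natl mulfV.
Qed.

Lemma joint_fibre_uniform u : joint (@p_alpha R) fibre_uniform u = 64^-1.
Proof.
have fibre_neq0 : (#|fibre (alpha u)|%:R : R) != 0.
  by rewrite pnatr_eq0 -lt0n card_fibre_gt0.
by rewrite /joint /fibre_uniform eqxx /p_alpha -/(fibre _) mulrAC mulfV ?mul1r.
Qed.

Lemma joint_is_dist (c : aa -> codon -> R) :
  admissible_cond c -> is_dist (joint (@p_alpha R) c).
Proof.
move=> c_adm; have [p_ge0 p_sum] := p_alpha_is_dist.
split=> [u|]; first by rewrite mulr_ge0 //; case: (c_adm (alpha u)) => [[]].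
rewrite (partition_big alpha predT) //= -p_sum; apply: eq_bigr => x _.
have [[_ c_sum] c_supp] := c_adm x.
rewrite -[RHS]mulr1 -c_sum mulr_sumr [RHS](bigID (fun u => alpha u == x)) /=.
rewrite [X in _ + X]big1 ?addr0 => [|u /c_supp ->]; last by rewrite mulr0.
by apply: eq_bigr => u /eqP ux; rewrite /joint ux.
Qed.

End AminoAcidMarginal.

Theorem lemma2 (R : realType) (q g : R) (m : nat) :
  0 <= q <= 1 -> 0 <= g <= 3 / 2 -> (1 <= m)%N ->
  exists Cnc : R,
    is_max (fun v => exists p : codon -> R, is_dist p /\ v = MI q g m p) Cnc /\
    is_max (fun v => exists c : aa -> codon -> R,
               admissible_cond c /\
               v = MI q g m (joint (@p_alpha R) c) - entropy (@p_alpha R))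
           (Cnc - entropy (@p_alpha R)).
Proof.
move=> hq hg _;
pose unif (_ : codon) : R := #|{: codon}|%:R^-1.
have MI_le_unif p : is_dist p -> MI q g m p <= MI q g m unif.
  move=> p_dist; exact: (mutinfo_le_uniform (W_ge0 m hq hg)
    (@W_row_sum R q g m) (@W_col_sum R q g m) (@W_row_perm R q g m) p_dist).
have joint_unif : joint (@p_alpha R) (@fibre_uniform R) =1 unif.
  by move=> u; rewrite joint_fibre_uniform /unif card_codon.
exists (MI q g m unif); split; split.
- by exists unif; split=> //; apply: uniform_is_dist; rewrite card_codon.
- by move=> _ [p [p_dist ->]]; apply: MI_le_unif.
- exists (@fibre_uniform R); split; first exact: fibre_uniform_admissible.
  by congr (_ - _); symmetry; apply: eq_mutinfo joint_unif.
- move=> _ [c [c_adm ->]]; rewrite lerD2r.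
  exact/MI_le_unif/joint_is_dist.
Qed.
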